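(* Let $\mathcal S$ be a system and $\mathcal T$ a target behavior. If $\tilde{\mathcal T}_1$ and $\tilde{\mathcal T}_2$ are both optimal approximations of $\mathcal T$ on $\mathcal S$, then $\tilde{\mathcal T}_1\sim\tilde{\mathcal T}_2$; i.e., the optimal approximation is unique up to simulation equivalence.
   Context: A behavior is a tuple $\mathcal B=\langle B,\mathcal A,b_0,\varrho\rangle$ with $B$ a finite set of states, $\mathcal A$ a set of actions, $b_0\in B$ the initial state, and $\varrho\subseteq B\times\mathcal A\times B$ a transition relation (written $b\xrightarrow{a}b'$); every state is assumed to have at least one outgoing transition. A system is a tuple $\mathcal S=\langle\mathcal B_1,\dots,\mathcal B_n\rangle$ of behaviors $\mathcal B_i=\langle B_i,\mathcal A_i,b_{i0},\varrho_i\rangle$. Its enacted system has states $B_1\times\dots\times B_n$ (for a state $s$, $\mathrm{beh}_i(s)$ denotes its $i$-th component), initial state $s_0=\langle b_{10},\dots,b_{n0}\rangle$, and transitions $s\xrightarrow{a,k}s'$ iff $\mathrm{beh}_k(s)\xrightarrow{a}\mathrm{beh}_k(s')$ in $\mathcal B_k$ and $\mathrm{beh}_i(s')=\mathrm{beh}_i(s)$ for all $i\neq k$. A system history is a finite sequence $h=s^0\xrightarrow{a^1,k^1}s^1\cdots\xrightarrow{a^\ell,k^\ell}s^\ell$ of enacted-system transitions with $s^0=s_0$; $\mathcal H_{\mathcal S}$ is the set of system histories, $|h|=\ell$, $\mathrm{last}(h)=s^\ell$, and $h|_i$ is the prefix of length $i$. A target behavior $\mathcal T=\langle T,\mathcal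 A,t_0,\varrho_T\rangle$ is a (possibly nondeterministic) behavior; a trace of $\mathcal T$ is a finite or infinite sequence $t^0\xrightarrow{a^1}t^1\xrightarrow{a^2}\cdots$ with $t^0=t_0$ and each step in $\varrho_T$. A controller for $\mathcal T$ on $\mathcal S$ is a partial function $C:\mathcal H_{\mathcal S}\times\varrho_T\to\{1,\dots,n\}$. $C$ realizes a trace $\tau=t^0\xrightarrow{a^1}t^1\xrightarrow{a^2}\cdots$ of $\mathcal T$ if for every $j$ such that $\tau$ has a step $t^j\xrightarrow{a^{j+1}}t^{j+1}$, and every system history $h=s^0\xrightarrow{a^1,k^1}\cdots\xrightarrow{a^j,k^j}s^j$ with $k^i=C(h|_{i-1},t^{i-1}\xrightarrow{a^i}t^i)$ for all $1\le i\le j$, the value $k=C(h,t^j\xrightarrow{a^{j+1}}t^{j+1})$ is defined and $\mathrm{beh}_k(s^j)$ has an outgoing $a^{j+1}$-transition in $\mathcal B_k$. $C$ is an exact composition for $\mathcal T$ on $\mathcal S$ if it realizes all traces of $\mathcal T$. For target behaviors $\mathcal T_i=\langle T_i,\mathcal A,t_{i0},\varrho_i\rangle$ ($i=1,2$), a simulation of $\mathcal T_2$ by $\mathcal T_1$ is a relation $R\subseteq T_2\times T_1$ such that $\langle t_2,t_1\rangle\in R$ and $\langle t_2,a,t_2'\rangle\in\varrho_2$ imply some $\langle t_1,a,t_1'\rangle\in\varrho_1$ with $\langle t_2',t_1'\rangle\in R$. $\mathcal T_2\preceq\mathcal T_1$ iff some simulation contains $\langle t_{20},t_{10}\rangle$;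 $\mathcal T_2\prec\mathcal T_1$ iff $\mathcal T_2\preceq\mathcal T_1$ and not $\mathcal T_1\preceq\mathcal T_2$; $\mathcal T_1\sim\mathcal T_2$ iff both $\preceq$ hold. $\tilde{\mathcal T}$ is an approximation of $\mathcal T$ on $\mathcal S$ iff $\tilde{\mathcal T}\preceq\mathcal T$ and there is an exact composition for $\tilde{\mathcal T}$ on $\mathcal S$. $\tilde{\mathcal T}$ is an optimal approximation of $\mathcal T$ on $\mathcal S$ iff it is an approximation of $\mathcal T$ on $\mathcal S$ and there is no approximation $\tilde{\mathcal T}'$ of $\mathcal T$ on $\mathcal S$ with $\tilde{\mathcal T}\prec\tilde{\mathcal T}'$. *)

From mathcomp Require Import all_boot.
Set Implicit Arguments. Unset Strict Implicit. Unset Printing Implicit Defensive.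

Record behavior (Act : Type) := Behavior {
  bst : finType;
  binit : bst;
  btr : bst -> Act -> bst -> Prop;
  btotal : forall b : bst, exists a b', btr b a b'
}.

(* A system of n behaviors, indexed by 'I_n (i.e. {1,...,n} shifted). *)
Definition system (Act : Type) (n : nat) := 'I_n -> behavior Act.

Definition sstate Act n (S : system Act n) := forall i : 'I_n, bst (S i).

Definition sinit Act n (S : system Act n) : sstate S := fun i => binit (S i).

Definition etr Act n (S : system Act n) (s : sstate S) (a : Act) (k : 'I_n)
  (s' : sstate S) : Prop :=
  btr (s k) a (s' k) /\ forall i, i <> k -> s' i = s i.

(* A system history s^0 -(a1,k1)-> s^1 ... -(al,kl)-> s^l with s^0 = s_0 is
   represented by the list of its steps (a^i, k^i, s^i). *)
Definition hstep Act n (S : system Act n) := (Act * 'I_n * sstate S)%type.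
Definition history Act n (S : system Act n) := seq (hstep S).

Fixpoint hist_from Act n (S : system Act n) (s : sstate S) (h : history S)
  : Prop :=
  match h with
  | [::] => True
  | (a, k, s') :: h' => etr s a k s' /\ hist_from s' h'
  end.

Definition is_history Act n (S : system Act n) (h : history S) : Prop :=
  hist_from (sinit S) h.

Definition hlast Act n (S : system Act n) (h : history S) : sstate S :=
  last (sinit S) [seq x.2 | x <- h].

(* A controller: partial function H_S x rho_T -> {1..n}; a target transition
   t -a-> t' is passed as its three components. *)
Definition controller Act n (S : system Act n) (T : behavior Act) :=
  history S -> bst T -> Act -> bst T -> option 'I_n.

(* Traces of T, finite or infinite: [tlen = Some l] means the trace
   t^0 -a^1-> ... -a^l-> t^l, [tlen = None] means an infinite trace.
   State t^j is [tst j], action a^j is [tact j] (tact 0 unused). *)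
Record trace Act (T : behavior Act) := Trace {
  tlen : option nat;
  tst : nat -> bst T;
  tact : nat -> Act
}.

(* "the trace has a step t^j -a^{j+1}-> t^{j+1}" *)
Definition has_step Act (T : behavior Act) (tau : trace T) (j : nat) : Prop :=
  match tlen tau with None => True | Some l => j < l end.

Definition is_trace Act (T : behavior Act) (tau : trace T) : Prop :=
  tst tau 0 = binit T /\
  forall j, has_step tau j -> btr (tst tau j) (tact tau j.+1) (tst tau j.+1).

(* h = s^0 -(a^1,k^1)-> ... -(a^j,k^j)-> s^j is a system history whose actions
   are those of tau and with k^i = C(h|_{i-1}, t^{i-1} -a^i-> t^i). *)
Definition follows Act n (S : system Act n) (T : behavior Act)
  (C : controller S T) (tau : trace T) (j : nat) (h : history S) : Prop :=
  is_history h /\ size h = j /\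
  forall i, i < j ->
    match onth h i with
    | Some (a, k, _) => a = tact tau i.+1 /\
        C (take i h) (tst tau i) (tact tau i.+1) (tst tau i.+1) = Some k
    | None => False
    end.

Definition realizes Act n (S : system Act n) (T : behavior Act)
  (C : controller S T) (tau : trace T) : Prop :=
  forall j, has_step tau j ->
  forall h, follows C tau j h ->
  exists k, C h (tst tau j) (tact tau j.+1) (tst tau j.+1) = Some k /\
    exists b', btr (hlast h k) (tact tau j.+1) b'.

Definition exact_composition Act n (S : system Act n) (T : behavior Act)
  (C : controller S T) : Prop :=
  forall tau : trace T, is_trace tau -> realizes C tau.

Definition is_simulation Act (T2 T1 : behavior Act)
  (R : bst T2 -> bst T1 -> Prop) : Prop :=
  forall t2 t1 a t2', R t2 t1 -> btr t2 a t2' ->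
    exists t1', btr t1 a t1' /\ R t2' t1'.

Definition simulated Act (T2 T1 : behavior Act) : Prop :=
  exists R, is_simulation R /\ R (binit T2) (binit T1).

Definition strictly_simulated Act (T2 T1 : behavior Act) : Prop :=
  simulated T2 T1 /\ ~ simulated T1 T2.

Definition sim_equiv Act (T1 T2 : behavior Act) : Prop :=
  simulated T1 T2 /\ simulated T2 T1.

Definition approximation Act n (S : system Act n) (T Tt : behavior Act) : Prop :=
  simulated Tt T /\ exists C : controller S Tt, exact_composition C.

Definition optimal_approximation Act n (S : system Act n) (T Tt : behavior Act)
  : Prop :=
  approximation S T Tt /\
  ~ (exists Tt' : behavior Act, approximation S T Tt' /\ strictly_simulated Tt Tt').

(* Idea: approximations are closed under a "disjoint union" U(T1,T2), the
   behavior with a fresh initial state that nondeterministically starts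
   behaving as T1 or as T2.  Indeed
   - U(T1,T2) is the least upper bound of T1 and T2 for simulation, so it is
     simulated by T whenever T1 and T2 are;
   - the controllers of T1 and T2 combine into an exact composition for
     U(T1,T2): a trace of the union lives in one component after its first
     step, and there the combined controller behaves like the component's.
   If T1 is optimal and T2 is an approximation, then T1 ⪯ U(T1,T2) and
   optimality forbid T1 ≺ U(T1,T2), hence U(T1,T2) ⪯ T1, and so
   T2 ⪯ U(T1,T2) ⪯ T1.  Exchanging the roles gives T1 ∼ T2. *)
From Stdlib Require Import Classical.
From mathcomp Require Import all_boot.
Set Implicit Arguments. Unset Strict Implicit.

Lemma has_step_mono Act (T : behavior Act) (tau : trace T) i j :
  i <= j -> has_step tau j -> has_step tau i.
Proof.
by rewrite /has_step; case: (tlen tau) => // l le_ij; exact: leq_ltn_trans.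
Qed.

Lemma simulated_trans Act (A B C : behavior Act) :
  simulated A B -> simulated B C -> simulated A C.
Proof.
move=> [R [simR R0]] [Q [simQ Q0]].
exists (fun a c => exists b, R a b /\ Q b c); split; last by exists (binit B).
move=> a c x a' [b [Rab Qbc]] step_a.
have [b' [step_b Rb']] := simR _ _ _ _ Rab step_a.
have [c' [step_c Qc']] := simQ _ _ _ _ Qbc step_b.
by exists c'; split=> //; exists b'.
Qed.

Section Transfer.
Variables (Act : Type) (n : nat) (S : system Act n) (B U : behavior Act).
Variables (C : controller S B) (CU : controller S U).
Variables (p : bst U -> bst B) (L : bst U -> Prop).

Let source (u : bst U) : Prop := u = binit U \/ L u.

Hypothesis p_init : p (binit U) = binit B.
Hypothesis p_step_init :
  forall a u', btr (binit U) a u' -> L u' -> btr (binit B) a (p u').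
Hypothesis p_step :
  forall u a u', L u -> btr u a u' -> L u' /\ btr (p u) a (p u').
Hypothesis CU_agrees : forall h u a u', source u -> L u' ->
  CU h u a u' = C h (p u) a (p u').

Lemma realizes_through_projection :
  exact_composition C -> forall tau : trace U, is_trace tau ->
  (has_step tau 0 -> L (tst tau 1)) -> realizes CU tau.
Proof.
move=> exactC tau [tau0 tau_step] L1.
have inL : forall i, has_step tau i -> L (tst tau i.+1).
  elim=> [|i IH] si; first exact: L1.
  exact: (p_step (IH (has_step_mono (leqnSn i) si)) (tau_step _ si)).1.
have inSource : forall i, has_step tau i -> source (tst tau i).
  by case=> [|i] si; [left | right; apply: inL; apply: has_step_mono si].
pose ptau := Trace (tlen tau) (fun j => p (tst tau j)) (tact tau).
have ptau_trace : is_trace ptau.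
  split=> [|[|j] sj] /=; first by rewrite tau0 p_init.
    rewrite tau0 p_init; apply: p_step_init (inL 0 sj).
    by rewrite -tau0; exact: tau_step.
  exact: (p_step (inL j (has_step_mono (leqnSn j) sj)) (tau_step _ sj)).2.
move=> j sj h [hist [size_h follow_h]].
have ptau_follow : follows C ptau j h.
  split=> //; split=> // i lt_ij.
  have si : has_step tau i := has_step_mono (ltnW lt_ij) sj.
  move: (follow_h i lt_ij); case: (onth h i) => // [[[a k] s]] [-> Ck].
  by split=> //; rewrite -CU_agrees //; [exact: inSource | exact: inL].
have [k [Ck enabled]] := exactC ptau ptau_trace j sj h ptau_follow.
by exists k; split=> //; rewrite CU_agrees //; [exact: inSource | exact: inL].
Qed.
End Transfer.

Section Union.
Variables (Act : Type) (T1 T2 : behavior Act).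

(* The disjoint union: a fresh initial state [None] followed by copies of the
   states of [T1] ([inl]) and [T2] ([inr]). *)
Definition ustate : finType := option (bst T1 + bst T2).

Definition utr (u : ustate) (a : Act) (u' : ustate) : Prop :=
  match u, u' with
  | None, Some (inl y) => btr (binit T1) a y
  | None, Some (inr y) => btr (binit T2) a y
  | Some (inl x), Some (inl y) => btr x a y
  | Some (inr x), Some (inr y) => btr x a y
  | _, _ => False
  end.

Lemma utr_total (u : ustate) : exists a u', utr u a u'.
Proof.
case: u => [[x|x]|].
- by have [a [y step]] := btotal x; exists a, (Some (inl y)).
- by have [a [y step]] := btotal x; exists a, (Some (inr y)).
- by have [a [y step]] := btotal (binit T1); exists a, (Some (inl y)).
Qed.

Definition union : behavior Act := @Behavior Act ustate None utr utr_total.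

Lemma simulated_union_l : simulated T1 union.
Proof.
exists (fun x (u : ustate) => u = Some (inl x) \/ (x = binit T1 /\ u = None)).
split; last by right.
by move=> x u a x' [->|[-> ->]] step; exists (Some (inl x')); split=> //; left.
Qed.

Lemma simulated_union_r : simulated T2 union.
Proof.
exists (fun x (u : ustate) => u = Some (inr x) \/ (x = binit T2 /\ u = None)).
split; last by right.
by move=> x u a x' [->|[-> ->]] step; exists (Some (inr x')); split=> //; left.
Qed.

Lemma union_simulated (T : behavior Act) :
  simulated T1 T -> simulated T2 T -> simulated union T.
Proof.
move=> [R1 [simR1 R10]] [R2 [simR2 R20]].
exists (fun (u : ustate) t => match u with
  | None => t = binit T | Some (inl x) => R1 x t | Some (inr x) => R2 x t end).
split=> // [[[x|x]|]] t a [[y|y]|] //= Rut step.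
- exact: simR1 Rut step.
- exact: simR2 Rut step.
- by rewrite Rut; exact: simR1 R10 step.
- by rewrite Rut; exact: simR2 R20 step.
Qed.

Definition left_of (u : ustate) : bst T1 :=
  if u is Some (inl x) then x else binit T1.
Definition right_of (u : ustate) : bst T2 :=
  if u is Some (inr x) then x else binit T2.
Definition in1 (u : ustate) : Prop := if u is Some (inl _) then True else False.
Definition in2 (u : ustate) : Prop := if u is Some (inr _) then True else False.

Variables (n : nat) (S : system Act n).
Variables (C1 : controller S T1) (C2 : controller S T2).

Definition union_controller : controller S union := fun h u a u' =>
  match u' with
  | Some (inl y) => if u is Some (inr _) then None else C1 h (left_of u) a y
  | Some (inr y) => if u is Some (inl _) then None else C2 h (right_of u) a y
  | None => None
  end.

Hypotheses (exact1 : exact_composition C1) (exact2 : exact_composition C2).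

Lemma union_realizes_l (tau : trace union) : is_trace tau ->
  (has_step tau 0 -> in1 (tst tau 1)) -> realizes union_controller tau.
Proof.
apply: (@realizes_through_projection _ _ S T1 union C1 union_controller
  left_of in1 _ _ _ _ exact1).
- by [].
- by move=> a [[?|?]|].
- by move=> [[?|?]|] a [[?|?]|].
- by move=> h [[?|?]|] a [[?|?]|] // [].
Qed.

Lemma union_realizes_r (tau : trace union) : is_trace tau ->
  (has_step tau 0 -> in2 (tst tau 1)) -> realizes union_controller tau.
Proof.
apply: (@realizes_through_projection _ _ S T2 union C2 union_controller
  right_of in2 _ _ _ _ exact2).
- by [].
- by move=> a [[?|?]|].
- by move=> [[?|?]|] a [[?|?]|].
- by move=> h [[?|?]|] a [[?|?]|] // [].
Qed.

(* Every first step of the union enters one of the two copies. *)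
Lemma union_exact : exact_composition union_controller.
Proof.
move=> tau tau_trace.
case first: (tst tau 1) => [[y|y]|].
- by apply: union_realizes_l; rewrite ?first.
- by apply: union_realizes_r; rewrite ?first.
- apply: union_realizes_l => // s0.
  by have := (proj2 tau_trace) 0 s0; rewrite (proj1 tau_trace) first.
Qed.
End Union.

Lemma union_approximation Act n (S : system Act n) (T T1 T2 : behavior Act) :
  approximation S T T1 -> approximation S T T2 ->
  approximation S T (union T1 T2).
Proof.
move=> [sim1 [C1 exact1]] [sim2 [C2 exact2]]; split.
- exact: union_simulated.
- by exists (union_controller C1 C2); exact: union_exact.
Qed.

Lemma optimal_simulates Act n (S : system Act n) (T T1 T2 : behavior Act) :
  optimal_approximation S T T1 -> approximation S T T2 -> simulated T2 T1.
Proof.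
move=> [approx1 not_improvable] approx2.
have union_below : simulated (union T1 T2) T1.
  apply: NNPP => not_below; apply: not_improvable.
  exists (union T1 T2); split; first exact: union_approximation.
  by split=> //; exact: simulated_union_l.
exact: simulated_trans (simulated_union_r T1 T2) union_below.
Qed.

Theorem theorem2 (Act : Type) (n : nat) (S : system Act n)
  (T T1 T2 : behavior Act) :
  optimal_approximation S T T1 -> optimal_approximation S T T2 ->
  sim_equiv T1 T2.
Proof.
move=> opt1 opt2; split.
- exact: optimal_simulates opt2 opt1.1.
- exact: optimal_simulates opt1 opt2.1.
Qed.
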